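(* Let $\psi(u,v)$ be a conjunction of difference constraints between two integer variables $u,v$ (of the forms $u\le v+d$ and $v\le u+d$, $d\in\mathbb{Z}$) which contains a conjunct $u\le v-c$ for some $c>0$. Let $n\ge3$. Then $\exists S_3,\dots,S_{n-1}.\ \bigwedge_{2\le i\le n-1}\Big(S_i=S_{i+1}\cup\{\min(S_i)\}\wedge\max(S_i)=\max(S_{i+1})\wedge\psi(\min(S_i),\min(S_{i+1}))\Big)$ is equivalent to $S_n\neq\emptyset\wedge S_2\setminus S_n\neq\emptyset\wedge S_n\subseteq S_2\wedge|S_2\setminus S_n|=n-2\wedge\max(S_2\setminus S_n)<\min(S_n)\wedge\forall y,z.\ \big(\mathsf{succ}((S_2\setminus S_n)\cup\{\min(S_n)\},y,z)\rightarrow\psi(y,z)\big)$.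
   Context: Set variables range over finite subsets of $\mathbb{Z}$, integer variables over $\mathbb{Z}$; $\min,\max$ of the empty set are undefined and atoms containing undefined terms are false. $\mathsf{succ}(S,x,y)$ abbreviates $x\in S\wedge y\in S\wedge x<y\wedge\forall z\in S.\,(z\le x\vee y\le z)$, i.e. $y$ is the successor of $x$ in $S$. $|\cdot|$ is cardinality. *)

(* Finite subsets of Z are represented by sequences of int,
   interpreted only up to membership (all notions below are membership-invariant). *)
From HB Require Import structures.
From mathcomp Require Import all_boot all_order all_algebra.
Set Implicit Arguments. Unset Strict Implicit. Unset Printing Implicit Defensive.
Import Order.TTheory GRing.Theory Num.Theory.
Local Open Scope ring_scope.

(* A difference constraint (b, d) on (u, v):
   b = true  : u <= v + d
   b = false : v <= u + d *)
Definition dconstr := (bool * int)%type.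

Definition psi (cs : seq dconstr) (u v : int) : Prop :=
  forall c, c \in cs -> if c.1 then u <= v + c.2 else v <= u + c.2.

Definition smin (S : seq int) : option int :=
  if S is x :: s then Some (foldr (fun y m => Order.min y m) x s) else None.
Definition smax (S : seq int) : option int :=
  if S is x :: s then Some (foldr (fun y m => Order.max y m) x s) else None.

Definition ssucc (S : seq int) (x y : int) : Prop :=
  x \in S /\ y \in S /\ x < y /\ (forall z, z \in S -> z <= x \/ y <= z).

(* The i-th conjunct:  S_i = S_{i+1} ∪ {min S_i} /\ max S_i = max S_{i+1}
   /\ psi(min S_i, min S_{i+1});  atoms with undefined terms are false. *)
Definition step (cs : seq dconstr) (Si Sj : seq int) : Prop :=
  (match smin Si with Some m => Si =i m :: Sj | None => False end) /\
  (match smax Si, smax Sj with Some a, Some b => a = b | _, _ => False end) /\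
  (match smin Si, smin Sj with Some a, Some b => psi cs a b | _, _ => False end).

Definition sdiff (A B : seq int) : seq int := [seq x <- A | x \notin B].

Definition rhs (cs : seq dconstr) (n : nat) (S2 Sn : seq int) : Prop :=
  let D := sdiff S2 Sn in
  Sn != [::] /\ D != [::] /\ {subset Sn <= S2} /\
  size (undup D) = (n - 2)%N /\
  (match smax D, smin Sn with Some a, Some b => a < b | _, _ => False end) /\
  (forall y z : int,
     (match smin Sn with Some m => ssucc (m :: D) y z | None => False end) ->
     psi cs y z).

(* Both sides are equivalent to the existence of integers m_2 < ... < m_n with
   m_n = min S_n, S_2 = {m_2, ..., m_(n-1)} u S_n and psi(m_j, m_(j+1)) for
   2 <= j < n.  From the chain of sets one takes m_j = min S_j: the conjunct
   u <= v - c makes psi(u, v) force u < v, and unfolding S_j = S_(j+1) u {m_j}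
   gives S_2 = {m_2, ..., m_(n-1)} u S_n.  Conversely m_2 < ... < m_(n-1)
   enumerate S_2 \ S_n, all below min S_n, and S_j is rebuilt as
   {m_j, ..., m_(n-1)} u S_n.  In both directions the successor pairs of
   {m_2, ..., m_n} are exactly the pairs (m_j, m_(j+1)). *)

From HB Require Import structures.
From mathcomp Require Import all_boot all_order all_algebra.
From mathcomp Require Import zify.
Import Order.TTheory GRing.Theory Num.Theory.
Local Open Scope ring_scope.

Lemma foldr_extremumP (op : int -> int -> int) (r : rel int) x s :
  reflexive r -> transitive r ->
  (forall a b, op a b \in [:: a; b]) ->
  (forall a b, r (op a b) a && r (op a b) b) ->
  foldr op x s \in x :: s /\ {in x :: s, forall y, r (foldr op x s) y}.
Proof.
move=> r_refl r_trans op_sel op_bound.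
elim: s => [|y s [IHin IHr]] /=.
  by split=> [|z]; rewrite ?mem_head // inE => /eqP ->.
have /andP [ry rm] := op_bound y (foldr op x s).
split.
  move: (op_sel y (foldr op x s)); rewrite !inE => /orP [/eqP ->|/eqP ->].
    by rewrite eqxx orbT.
  by move: IHin; rewrite inE => /orP [->|->]; rewrite ?orbT.
move=> z; rewrite !inE => /or3P [/eqP ->|/eqP ->|zs].
- exact: r_trans rm (IHr _ (mem_head _ _)).
- exact: ry.
- by apply: r_trans rm (IHr _ _); rewrite inE zs orbT.
Qed.

Variant smin_spec (S : seq int) : option int -> Prop :=
  | SminSome m of m \in S & {in S, forall y, m <= y} : smin_spec S (Some m)
  | SminNone of S = [::] : smin_spec S None.

Variant smax_spec (S : seq int) : option int -> Prop :=
  | SmaxSome m of m \in S & {in S, forall y, y <= m} : smax_spec S (Some m)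
  | SmaxNone of S = [::] : smax_spec S None.

Lemma sminP S : smin_spec S (smin S).
Proof.
case: S => [|x s]; first exact: SminNone.
have [] := @foldr_extremumP (fun y m => Order.min y m) <=%O x s.
- exact: lexx.
- exact: le_trans.
- by move=> a b; rewrite minEle !inE; case: ifP; rewrite eqxx ?orbT.
- by move=> a b; rewrite !ge_min !lexx orbT.
by move=> ? ?; apply: SminSome.
Qed.

Lemma smaxP S : smax_spec S (smax S).
Proof.
case: S => [|x s]; first exact: SmaxNone.
have [] := @foldr_extremumP (fun y m => Order.max y m) >=%O x s.
- exact: lexx.
- by move=> a b c /= ba cb; apply: le_trans cb ba.
- by move=> a b; rewrite maxEle !inE; case: ifP; rewrite eqxx ?orbT.
- by move=> a b; rewrite /= !le_max !lexx orbT.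
by move=> ? ?; apply: SmaxSome.
Qed.

Lemma sminE S m : m \in S -> {in S, forall y, m <= y} -> smin S = Some m.
Proof.
move=> Sm m_le; case: sminP => [m' Sm' m'_le|S0]; last by rewrite S0 in Sm.
by congr Some; apply: le_anti; rewrite m_le // m'_le.
Qed.

Lemma smin_Some {S m} : smin S = Some m -> m \in S /\ {in S, forall y, m <= y}.
Proof. by case: sminP => // m' Sm' m'_le [<-]. Qed.

Lemma smaxE S m : m \in S -> {in S, forall y, y <= m} -> smax S = Some m.
Proof.
move=> Sm le_m; case: smaxP => [m' Sm' le_m'|S0]; last by rewrite S0 in Sm.
by congr Some; apply: le_anti; rewrite le_m // le_m'.
Qed.

Lemma eq_smin {S T} : S =i T -> smin S = smin T.
Proof.
move=> eqST; case: sminP => [m Sm m_le|S0].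
  by symmetry; apply: sminE => [|y]; rewrite -eqST //; apply: m_le.
by case: T eqST => // x s /(_ x); rewrite S0 mem_head.
Qed.

Lemma eq_smax {S T} : S =i T -> smax S = smax T.
Proof.
move=> eqST; case: smaxP => [m Sm le_m|S0].
  by symmetry; apply: smaxE => [|y]; rewrite -eqST //; apply: le_m.
by case: T eqST => // x s /(_ x); rewrite S0 mem_head.
Qed.

Lemma smax_cons {x T y} : y \in T -> x <= y -> smax (x :: T) = smax T.
Proof.
move=> Ty le_xy; case: (smaxP T) => [m Tm le_m|T0]; last by rewrite T0 in Ty.
apply: smaxE => [|z]; first by rewrite inE Tm orbT.
by rewrite inE => /predU1P [->|/le_m //]; apply: le_trans le_xy (le_m _ Ty).
Qed.

Lemma eq_ssucc {S T} y z : S =i T -> ssucc S y z <-> ssucc T y z.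
Proof.
move=> eqST; rewrite /ssucc !eqST.
by split=> [] [-> [-> [-> bet]]]; do 3 split=> //; move=> x Tx; apply: bet;
  rewrite ?eqST // -eqST.
Qed.

Section IncreasingOnInterval.

Context {f : nat -> int} {a b : nat}.
Hypothesis f_incr : forall j, (a <= j < b)%N -> f j < f j.+1.

Lemma incr_on_le i j :
  (a <= i <= b)%N -> (a <= j <= b)%N -> (f i <= f j) = (i <= j)%N.
Proof.
apply: (@Order.NatMonotonyTheory.incn_inP _ _ [pred k | a <= k <= b]%N f).
  move=> p q /andP [ap _] /andP [_ qb] k /andP [pk kq].
  by rewrite inE (leq_trans ap (ltnW pk)) (leq_trans (ltnW kq) qb).
by move=> k /andP [ak _] /andP [_ kb]; apply: f_incr; lia.
Qed.

Lemma incr_on_lt i j :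
  (a <= i <= b)%N -> (a <= j <= b)%N -> (f i < f j) = (i < j)%N.
Proof. by move=> ai aj; rewrite ltNge incr_on_le // ltnNge. Qed.

Lemma ssucc_map_iota y z : (a <= b)%N ->
  ssucc [seq f j | j <- iota a (b - a).+1] y z <->
  exists2 j, (a <= j < b)%N & y = f j /\ z = f j.+1.
Proof.
move=> ab; split.
  case=> /mapP [j + ->] [/mapP [k + ->] [+ bet]]; rewrite !mem_iota => aj ak.
  rewrite incr_on_lt ?subnSK; try lia => jk.
  exists j; first lia.
  split=> //; case: (ltngtP k j.+1) => [|j1_lt_k|-> //]; first lia.
  have: f j.+1 \in [seq f j | j <- iota a (b - a).+1] by rewrite map_f // mem_iota; lia.
  by move/bet; rewrite !incr_on_le; lia.
case=> j aj [-> ->]; split; first by rewrite map_f // mem_iota; lia.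
split; first by rewrite map_f // mem_iota; lia.
split; first exact: f_incr.
move=> _ /mapP [i + ->]; rewrite mem_iota => ai.
by rewrite !incr_on_le; lia.
Qed.

End IncreasingOnInterval.

Lemma mem_map_iotaSr (f : nat -> int) a k :
  [seq f j | j <- iota a k.+1] =i f (a + k)%N :: [seq f j | j <- iota a k].
Proof. by move=> x; rewrite -addn1 iotaD map_cat mem_cat /= mem_seq1 inE orbC. Qed.

Lemma mem_telescope (T : nat -> seq int) (m : nat -> int) a b : (a <= b)%N ->
  (forall j, (a <= j < b)%N -> T j =i m j :: T j.+1) ->
  T a =i [seq m j | j <- iota a (b - a)] ++ T b.
Proof.
move=> ab T_cons.
suff telescope k i : (a <= i)%N -> (i + k = b)%N ->
    T i =i [seq m j | j <- iota i k] ++ T b.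
  by apply: telescope; rewrite ?subnKC.
elim: k i => [i _ <- //|k IH i ai ikb x]; first by rewrite addn0.
by rewrite T_cons /= ?inE ?(IH i.+1) //; lia.
Qed.

Lemma psi_lt cs c u v : 0 < c -> (true, - c) \in cs -> psi cs u v -> u < v.
Proof. by move=> c_gt0 cs_c /(_ _ cs_c) /=; lia. Qed.

Definition chain (cs : seq dconstr) n (S2 Sn : seq int) (m : nat -> int) : Prop :=
  [/\ forall j, (2 <= j < n)%N -> m j < m j.+1,
      forall j, (2 <= j < n)%N -> psi cs (m j) (m j.+1),
      smin Sn = Some (m n) &
      S2 =i [seq m j | j <- iota 2 (n - 2)] ++ Sn].

Lemma chain_of_steps {cs c n S} : 0 < c -> (true, - c) \in cs -> (3 <= n)%N ->
  (forall i, (2 <= i)%N -> (i <= n - 1)%N -> step cs (S i) (S i.+1)) ->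
  exists m, chain cs n (S 2%N) (S n) m.
Proof.
move=> c_gt0 cs_c n_ge3 steps.
pose m i := odflt 0 (smin (S i)).
have sminS i : (2 <= i <= n)%N -> smin (S i) = Some (m i).
  case/andP=> i_ge2 i_le; rewrite /m; case: (ltnP i n) => [i_lt|i_ge].
    by have [] := steps i i_ge2 ltac:(lia); case: (smin _).
  have -> : i = (n - 1).+1 by lia.
  have [_ [_]] := steps (n - 1)%N ltac:(lia) (leqnn _).
  by case: (smin _) => // ?; case: (smin _).
have step_cons j : (2 <= j < n)%N -> S j =i m j :: S j.+1 /\ psi cs (m j) (m j.+1).
  move=> jr; have [+ [_ +]] := steps j ltac:(lia) ltac:(lia).
  by rewrite !sminS /=; [split | lia..].
exists m; split.
- by move=> j /step_cons [_]; apply: psi_lt c_gt0 cs_c.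
- by move=> j /step_cons [].
- by rewrite sminS //; lia.
- by apply: mem_telescope => [|j /step_cons []]; first lia.
Qed.

Lemma steps_of_chain {cs n S2 Sn m} : (3 <= n)%N -> chain cs n S2 Sn m ->
  exists S : nat -> seq int, S 2%N = S2 /\ S n = Sn /\
    (forall i, (2 <= i)%N -> (i <= n - 1)%N -> step cs (S i) (S i.+1)).
Proof.
move=> n_ge3 [m_incr m_psi sminSn S2E].
have [mn_Sn mn_le] := smin_Some sminSn.
pose T i := [seq m j | j <- iota i (n - i)] ++ Sn.
have T_cons i : (i < n)%N -> T i = m i :: T i.+1.
  by move=> i_lt; rewrite /T -(subnSK i_lt).
have mn_T i : m n \in T i by rewrite mem_cat mn_Sn orbT.
have sminT i : (2 <= i <= n)%N -> smin (T i) = Some (m i).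
  move=> ir; apply: sminE => [|y].
    case: (ltnP i n) => [/T_cons -> | i_ge]; first exact: mem_head.
    by have -> : i = n by lia.
  rewrite mem_cat => /orP [/mapP [j + ->] | /mn_le]; rewrite ?mem_iota => jr.
    by rewrite (incr_on_le m_incr); lia.
  by apply: le_trans jr; rewrite (incr_on_le m_incr); lia.
exists (fun i => if i == 2%N then S2 else T i).
split=> //; split.
  have -> : (n == 2%N) = false by apply/eqP; lia.
  by rewrite /T subnn.
move=> i i_ge2 i_lt; have -> : (i.+1 == 2%N) = false by apply/eqP; lia.
have ST : (if i == 2%N then S2 else T i) =i T i.
  by case: eqVneq => [-> | //]; apply: S2E.
rewrite /step (eq_smin ST) (eq_smax ST) !sminT; try lia.
split; first by move=> x; rewrite ST T_cons //; lia.
split; last by apply: m_psi; lia.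
rewrite T_cons; last by lia.
rewrite (smax_cons (mn_T i.+1)); last by rewrite (incr_on_le m_incr); lia.
by case: smaxP (mn_T i.+1) => // ->.
Qed.

Lemma rhs_of_chain {cs n S2 Sn m} :
  (3 <= n)%N -> chain cs n S2 Sn m -> rhs cs n S2 Sn.
Proof.
move=> n_ge3 [m_incr m_psi sminSn S2E].
have [mn_Sn mn_le] := smin_Some sminSn.
have m_lt_mn j : (2 <= j < n)%N -> m j < m n.
  by move=> jr; rewrite (incr_on_lt m_incr); lia.
rewrite /rhs sminSn; set D := sdiff S2 Sn.
have memD : D =i [seq m j | j <- iota 2 (n - 2)].
  move=> x; rewrite mem_filter S2E mem_cat.
  case: (boolP (x \in Sn)) => [/mn_le le_x | _]; rewrite /= ?orbT ?orbF //.
  apply/esym/mapP => [[j]]; rewrite mem_iota => jr xE.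
  by move: le_x; rewrite xE leNgt m_lt_mn //; lia.
have m2_D : m 2%N \in D by rewrite memD map_f // mem_iota; lia.
split; first by apply/eqP => Sn0; rewrite Sn0 in mn_Sn.
split; first by apply/eqP => D0; rewrite D0 in m2_D.
split; first by move=> x x_Sn; rewrite S2E mem_cat x_Sn orbT.
split.
  have -> : (n - 2)%N = size [seq m j | j <- iota 2 (n - 2)].
    by rewrite size_map size_iota.
  apply/perm_size/uniq_perm => [||x]; rewrite ?undup_uniq ?mem_undup ?memD //.
  rewrite map_inj_in_uniq ?iota_uniq // => i j; rewrite !mem_iota => ir jr mij.
  have [{}ir {}jr] : (2 <= i <= n)%N /\ (2 <= j <= n)%N by lia.
  apply/eqP; rewrite eqn_leq.
  by rewrite -(incr_on_le m_incr _ _ ir jr) -(incr_on_le m_incr _ _ jr ir) mij lexx.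
split.
  case: smaxP m2_D => [a + _ _ | ->] //.
  by rewrite memD => /mapP [j + ->]; rewrite mem_iota => jr; apply: m_lt_mn; lia.
have mem_mnD : m n :: D =i [seq m j | j <- iota 2 (n - 2).+1].
  by move=> x; rewrite mem_map_iotaSr (subnKC (ltnW n_ge3)) !inE memD.
move=> y z /(eq_ssucc _ _ mem_mnD) /(ssucc_map_iota m_incr _ _ (ltnW n_ge3)).
by case=> j jr [-> ->]; apply: m_psi.
Qed.

Lemma chain_of_rhs {cs n S2 Sn} : (3 <= n)%N -> rhs cs n S2 Sn ->
  exists m, chain cs n S2 Sn m.
Proof.
move=> n_ge3 [Sn0 [_ [Sn_sub [sizeD]]]].
case: sminP => [m0 m0_Sn m0_le | Sn_nil]; last by rewrite Sn_nil in Sn0.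
set D := sdiff S2 Sn => -[maxD succ_psi].
have D_lt x : x \in D -> x < m0.
  by case: smaxP maxD => // a _ le_a a_lt /le_a/le_lt_trans; apply.
set l := sort <=%O (undup D).
have size_l : size l = (n - 2)%N by rewrite size_sort.
have l_sorted : sorted <%O l by rewrite sort_lt_sorted undup_uniq.
have mem_l : l =i D by move=> x; rewrite mem_sort mem_undup.
pose m j := nth m0 l (j - 2).
have mn : m n = m0 by rewrite /m nth_default // size_l.
have l_eq : [seq m j | j <- iota 2 (n - 2)] = l.
  rewrite -size_l (iotaDl 2 0) -map_comp -[RHS](mkseq_nth m0).
  by apply: eq_map => j; rewrite /= /m addKn.
have m_incr j : (2 <= j < n)%N -> m j < m j.+1.
  move=> jr; case: (ltnP j.+1 n) => [j1_lt | j1_ge].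
    rewrite /m subSn; last by lia.
    by apply: (sorted_ltn_nth lt_trans) => //; rewrite inE size_l; lia.
  have -> : j.+1 = n by lia.
  by rewrite mn; apply: D_lt; rewrite -mem_l mem_nth // size_l; lia.
have mem_mD : m0 :: D =i [seq m j | j <- iota 2 (n - 2).+1].
  by move=> x; rewrite mem_map_iotaSr (subnKC (ltnW n_ge3)) mn !inE l_eq mem_l.
exists m; split=> //.
- move=> j jr; apply: succ_psi; apply/(eq_ssucc _ _ mem_mD).
  by apply/(ssucc_map_iota m_incr _ _ (ltnW n_ge3)); exists j.
- by rewrite mn; apply: sminE.
- move=> x; rewrite l_eq mem_cat mem_l mem_filter.
  by case: (boolP (x \in Sn)) => [/Sn_sub -> | ]; rewrite ?orbT ?orbF.
Qed.

Theorem mainTheorem6 (cs : seq dconstr) (c : int) (hc : 0 < c)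
  (hin : (true, - c) \in cs) (n : nat) (hn : (3 <= n)%N) (S2 Sn : seq int) :
  (exists S : nat -> seq int,
     S 2%N = S2 /\ S n = Sn /\
     (forall i : nat, (2 <= i)%N -> (i <= n - 1)%N -> step cs (S i) (S i.+1)))
  <-> rhs cs n S2 Sn.
Proof.
split=> [[S [<- [<- steps]]] | /(chain_of_rhs hn) [m ch]].
  have [m ch] := chain_of_steps hc hin hn steps.
  exact: rhs_of_chain hn ch.
exact: steps_of_chain hn ch.
Qed.
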